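(* For any graph $G$, $\chi_c(G,\pm)=2\chi_c(G)$.
   Context: Graphs are finite, may have multiple edges, no loops. A signed graph $(G,\sigma)$ is a graph $G$ with a signature $\sigma:E(G)\to\{+1,-1\}$. The digon graph $(G,\pm)$ has vertex set $V(G)$ and, for each pair $\{u,v\}$ forming an edge of $G$, both a positive edge $uv$ and a negative edge $uv$. For real $r\ge 2$, $C^r$ is the circle of circumference $r$, $d_{C^r}(x,y)=\min\{|x-y|,r-|x-y|\}$, $\overline{x}=x+r/2\pmod r$. A circular $r$-coloring of a signed graph is $f:V\to C^r$ with $d_{C^r}(f(u),f(v))\ge1$ for each positive edge $uv$ and $d_{C^r}(f(u),\overline{f(v)})\ge1$ for each negative edge $uv$; the signed circular chromatic number $\chi_c(G,\sigma)$ is the infimum of such $r\ge2$. For the unsigned graph $G$, a circular $r$-coloring requires $d_{C^r}(f(u),f(v))\ge1$ for every edge, and $\chi_c(G)$ is the infimum of such $r$. *)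

From mathcomp Require Import all_boot all_order all_algebra.
From mathcomp Require Import boolp classical_sets reals.
Set Implicit Arguments. Unset Strict Implicit. Unset Printing Implicit Defensive.
Import Order.TTheory GRing.Theory Num.Theory.
Local Open Scope ring_scope.
Local Open Scope classical_set_scope.

Definition loopless (V E : finType) (ends : E -> V * V) : Prop :=
  forall e, (ends e).1 != (ends e).2.

Section Circ.
Variable R : realType.

(* distance on the circle C^r (points represented by reals in [0, r)) *)
Definition dC (r x y : R) : R := Num.min `|x - y| (r - `|x - y|).

Definition antip (r x : R) : R := if x + r / 2 < r then x + r / 2 else x + r / 2 - r.

Definition on_circle (r : R) (V : finType) (f : V -> R) : Prop :=
  forall v, 0 <= f v /\ f v < r.

(* circular r-coloring of the signed graph (V, E, ends, sigma);
   sigma e = true means positive edge, false means negative edge *)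
Definition signed_circ_coloring (V E : finType) (ends : E -> V * V)
  (sigma : E -> bool) (r : R) (f : V -> R) : Prop :=
  on_circle r f /\
  forall e, if sigma e then 1 <= dC r (f (ends e).1) (f (ends e).2)
            else 1 <= dC r (f (ends e).1) (antip r (f (ends e).2)).

Definition signed_chi_c (V E : finType) (ends : E -> V * V) (sigma : E -> bool) : R :=
  inf [set r : R | 2 <= r /\ exists f : V -> R, signed_circ_coloring ends sigma r f].

Definition circ_coloring (V E : finType) (ends : E -> V * V) (r : R) (f : V -> R) : Prop :=
  on_circle r f /\ forall e, 1 <= dC r (f (ends e).1) (f (ends e).2).

Definition chi_c (V E : finType) (ends : E -> V * V) : R :=
  inf [set r : R | 1 <= r /\ exists f : V -> R, circ_coloring ends r f].

End Circ.

(* The digon graph (G, ±): for every edge of G, one positive and one negative copy.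
   Edge type E * bool; the copy (e, true) is positive, (e, false) negative. *)
Definition digon_ends (V E : finType) (ends : E -> V * V) : (E * bool)%type -> V * V :=
  fun p => ends p.1.
Definition digon_sign (E : finType) : (E * bool)%type -> bool := fun p => p.2.

(* A circular r-coloring f of G is a signed circular 2r-coloring of (G, ±):
   on the circle of length 2r the antipode of f v is f v + r, which is again
   at distance at least 1 from f u.  Conversely, folding a 2r-coloring of
   (G, ±) modulo r (reducing colors in [r, 2r) by r) gives an r-coloring of G,
   because the positive and the negative copy of an edge together forbid
   f u - f v from lying within distance 1 of 0 and of r.  Hence the two sets
   of admissible circumferences differ by a factor of 2, and so do their
   infima. *)

From mathcomp Require Import all_boot all_order all_algebra.
From mathcomp Require Import boolp classical_sets reals.
From mathcomp Require Import lra.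
Import Order.TTheory GRing.Theory Num.Theory.
Local Open Scope ring_scope.
Local Open Scope classical_set_scope.

Lemma inf_scale (R : realType) (k : R) (S T : set R) :
  0 < k -> S !=set0 -> has_lbound S ->
  (forall r, S r -> T (k * r)) -> (forall s, T s -> S (s / k)) ->
  inf T = k * inf S.
Proof.
move=> k_gt0 [r0 Sr0] [b Sb] ST TS.
have lbT : has_lbound T.
  exists (k * b) => s /TS /Sb; by rewrite ler_pdivlMr // mulrC.
apply/eqP; rewrite eq_le; apply/andP; split.
- rewrite -ler_pdivrMl //; apply: lb_le_inf; first by exists r0.
  move=> r /ST /(ge_inf lbT); by rewrite ler_pdivrMl.
- apply: lb_le_inf; first by exists (k * r0); exact: ST.
  move=> s /TS /(ge_inf (ex_intro _ b Sb)); by rewrite ler_pdivlMr // mulrC.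
Qed.

Lemma dC_ge1 (R : realType) (r x y : R) :
  1 <= dC r x y <->
  (1 <= x - y /\ x - y <= r - 1) \/ (x - y <= -1 /\ y - x <= r - 1).
Proof.
rewrite /dC le_min.
have [xy_ge0|xy_lt0] := lerP 0 (x - y).
- rewrite ger0_norm //; split; first by case/andP; left; lra.
  by case=> -[] *; apply/andP; split; lra.
- rewrite ltr0_norm //; split; first by case/andP; right; lra.
  by case=> -[] *; apply/andP; split; lra.
Qed.

Lemma circ_coloring_digon (R : realType) (V E : finType) (ends : E -> V * V)
    (r : R) (f : V -> R) :
  circ_coloring ends r f ->
  signed_circ_coloring (digon_ends ends) (@digon_sign E) (2 * r) f.
Proof.
move=> [f_on f_edge]; split=> [v|[e b]].
  by have [] := f_on v; split; lra.
rewrite /digon_sign /digon_ends /=.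
have /dC_ge1 far := f_edge e.
have [? ?] := f_on (ends e).1; have [? ?] := f_on (ends e).2.
case: b; apply/dC_ge1; first lra.
by rewrite /antip; case: ifP => ?; lra.
Qed.

Lemma digon_coloring_fold (R : realType) (V E : finType) (ends : E -> V * V)
    (s : R) (g : V -> R) :
  signed_circ_coloring (digon_ends ends) (@digon_sign E) s g ->
  circ_coloring ends (s / 2) (fun v => if g v < s / 2 then g v else g v - s / 2).
Proof.
move=> [g_on g_edge]; split=> [v|e].
  by have [] := g_on v; case: ifP; split; lra.
have /dC_ge1 := g_edge (e, true); have /dC_ge1 := g_edge (e, false).
rewrite /digon_sign /digon_ends /antip /=.
have [? ?] := g_on (ends e).1; have [? ?] := g_on (ends e).2.
move=> neg pos; apply/dC_ge1.
by move: neg; case: ifP => ? neg; case: ifP => ?; case: ifP => ?; lra.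
Qed.

Lemma loopless_circ_colorable (R : realType) (V E : finType) (ends : E -> V * V) :
  loopless ends -> exists f : V -> R, circ_coloring ends (#|V|%:R + 1) f.
Proof.
move=> Hloop; exists (fun v => (enum_rank v : nat)%:R); split=> [v|e].
  split; first exact: ler0n.
  by have := ltn_ord (enum_rank v); rewrite -(ltr_nat R); lra.
apply/dC_ge1.
have rank_neq : (enum_rank (ends e).1 : nat) != enum_rank (ends e).2.
  by apply: contra (Hloop e) => /eqP /val_inj /enum_rank_inj ->.
move: (ltn_ord (enum_rank (ends e).1)) (ltn_ord (enum_rank (ends e).2)) rank_neq.
move: (enum_rank _ : nat) (enum_rank _ : nat) => i j.
rewrite -!(ltr_nat R) => i_lt j_lt.
have := ler0n R i; have := ler0n R j.
by case: ltngtP => // ij j_ge0 i_ge0 _; rewrite -(ler_nat R) -natr1 in ij; lra.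
Qed.

Theorem lemma6 (R : realType) (V E : finType) (ends : E -> V * V)
  (Hloop : loopless ends) :
  signed_chi_c R (digon_ends ends) (@digon_sign E) = 2 * chi_c R ends.
Proof.
apply: inf_scale => //.
- have [f f_col] := @loopless_circ_colorable R _ _ _ Hloop.
  by exists (#|V|%:R + 1); split; [have := ler0n R #|V|; lra | exists f].
- by exists 1 => r [].
- move=> r [r_ge1 [f /circ_coloring_digon f_col]].
  by split; [lra | exists f].
- move=> s [s_ge2 [g /digon_coloring_fold g_col]].
  by split; [lra | eexists; exact: g_col].
Qed.
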